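(* For any $n\geq 2$ there is a subset $\mathbf{\Pi}$ of permutations on $[n]$ with $|\mathbf{\Pi}|\leq C_0^n$, where $C_0>0$ is a universal constant, having the following property. Let $p\in(0,1/2]$, $\delta\in[1/n,1/2]$, $s\in[-1,0]$, $\nu\in(0,1]$, $L\geq 1$, $T>0$, and let $x\in{\rm Incomp}_n(\delta,\nu)$ be such that $T/2\leq \mathcal{T}_p(x,L)\leq T$. Then there is $\sigma=\sigma(x)\in\mathbf{\Pi}$ such that the vector $\big(\mathbf{Y}_{\sigma(i)}(p,x,L,s)\big)_{i=1}^n$ belongs to $\mathcal A(n,\delta,\nu,T)$.
   Context: Notation and definitions. For $\delta,\nu\in(0,1]$, ${\rm Comp}_n(\delta,\nu)$ is the set of unit vectors $x\in\mathbb{R}^n$ for which there is $y\in\mathbb{R}^n$ with at most $\delta n$ nonzero coordinates and $\|x-y\|_2\leq\nu$; ${\rm Incomp}_n(\delta,\nu):=S^{n-1}\setminus{\rm Comp}_n(\delta,\nu)$. The Lévy concentration function of a real random variable $Z$ is $\mathcal L(Z,t)=\sup_{\lambda\in\mathbb{R}}\mathbb{P}\{|Z-\lambda|\leq t\}$. For $p\in(0,1/2]$, $x\in S^{n-1}$ and $L>0$, the threshold $\mathcal{T}_p(x,L)$ is the supremum of all $t\in(0,1]$ such that $\mathcal L\big(\sum_{i=1}^n b_ix_i,t\big)>Lt$, where $b_1,\dots,b_n$ are independent Bernoulli($p$) random variables (taking value $1$ with probability $p$ and $0$ with probability $1-p$). For $p\in(0,1/2]$, $s\in[-1,0]$, $x\in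 S^{n-1}$, $L\geq1$, $\mathbf{Y}(p,x,L,s)\in\mathbb{Z}^n$ denotes a fixed (chosen once for each $(p,x,L,s)$) integer vector satisfying, with universal constants $C_1,c_1>0$: (a) $\big\|\frac{\sqrt n}{\mathcal{T}_p(x,L)}x-\mathbf{Y}(p,x,L,s)\big\|_\infty\leq1$; (b) $\mathbb{P}\{|\sum_i b_i\mathbf{Y}_i(p,x,L,s)+\frac{s\sqrt n}{\mathcal{T}_p(x,L)}\sum_i x_i|\leq t\}\leq \frac{C_1L\mathcal{T}_p(x,L)}{\sqrt n}t$ for all $t\geq\sqrt n$; (c) $\mathcal L(\sum_i b_i\mathbf{Y}_i(p,x,L,s),\sqrt n)\geq c_1L\mathcal{T}_p(x,L)$; (d) $\big|\frac{\sqrt n}{\mathcal{T}_p(x,L)}\sum_i x_i-\sum_i\mathbf{Y}_i(p,x,L,s)\big|\leq C_1\sqrt n$. (Such a vector exists by a randomized rounding argument.) For $n\geq2$, $\delta\in[1/n,1/2]$, $\nu\in(0,1]$ and $T\in(0,1]$ with $\nu/T\geq2$, the set $\mathcal A(n,\delta,\nu,T)=A_1\times\dots\times A_n\subset\mathbb{Z}^n$ is defined by: for $1\leq j\leq\log_2(\delta n)$ and $2^{-j}\delta n<i\leq2^{-j+1}\delta n$, $A_i:=\mathbb{Z}\cap\big[-\lceil\frac{2^{(j+3)/2}}{\sqrt\delta\,T}\rceil-1,\lceil\frac{2^{(j+3)/2}}{\sqrt\delta\,T}\rceil+1\big]\setminus\big[1-\lfloor\frac{\nu}{T}\rfloor,\lfloor\frac{\nu}{T}\rfloor-1\big]$;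 for $i>\delta n$, $A_i:=\mathbb{Z}\cap\big[-\lceil\frac{\sqrt8}{\sqrt\delta\,T}\rceil-1,\lceil\frac{\sqrt8}{\sqrt\delta\,T}\rceil+1\big]$; and $A_1:=\mathbb{Z}\cap\big[-\lceil\frac{2\sqrt n}{T}\rceil-1,\lceil\frac{2\sqrt n}{T}\rceil+1\big]\setminus\big[1-\lfloor\frac{\nu}{T}\rfloor,\lfloor\frac{\nu}{T}\rfloor-1\big]$. *)

From HB Require Import structures.
From mathcomp Require Import all_boot all_order all_algebra all_fingroup.
From mathcomp Require Import boolp classical_sets reals.
Set Implicit Arguments. Unset Strict Implicit. Unset Printing Implicit Defensive.
Import Order.TTheory GRing.Theory Num.Theory.
Local Open Scope ring_scope.
Local Open Scope classical_set_scope.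

Section Defs.
Variable R : realType.

(** Probability, for independent Bernoulli(p) variables b_1..b_n, of an event E
    on the outcome b : {ffun 'I_n -> bool} (b i = true means b_i = 1). *)
Definition bprob (n : nat) (p : R) (E : {ffun 'I_n -> bool} -> bool) : R :=
  \sum_(b : {ffun 'I_n -> bool})
     (\prod_(i < n) (if b i then p else 1 - p)) * (E b)%:R.

Definition bsum (n : nat) (y : 'I_n -> R) (b : {ffun 'I_n -> bool}) : R :=
  \sum_(i < n) (b i)%:R * y i.

Definition levy (n : nat) (p : R) (Z : {ffun 'I_n -> bool} -> R) (t : R) : R :=
  sup (range (fun lam : R => bprob p (fun b => `|Z b - lam| <= t))).

Definition Tp (n : nat) (p : R) (x : 'I_n -> R) (L : R) : R :=
  sup [set t : R | 0 < t <= 1 /\ levy p (bsum x) t > L * t].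

Definition unit_vec (n : nat) (x : 'I_n -> R) : Prop := \sum_(i < n) x i ^+ 2 = 1.

Definition Comp (n : nat) (delta nu : R) (x : 'I_n -> R) : Prop :=
  unit_vec x /\
  exists y : 'I_n -> R,
    (#|[set i | y i != 0]|%:R <= delta * n%:R) /\
    Num.sqrt (\sum_(i < n) (x i - y i) ^+ 2) <= nu.

Definition Incomp (n : nat) (delta nu : R) (x : 'I_n -> R) : Prop :=
  unit_vec x /\ ~ Comp delta nu x.

Definition in_box (a : R) (z : int) : Prop :=
  - Num.ceil a - 1 <= z <= Num.ceil a + 1.

Definition out_gap (nu T : R) (z : int) : Prop :=
  ~ (1 - Num.floor (nu / T) <= z <= Num.floor (nu / T) - 1).

(** membership of the 1-based coordinate i in A_i (the three cases of the
    definition of A(n, delta, nu, T), written as a conjunction of implications;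
    the cases are disjoint and cover {1..n}) *)
Definition in_Ai (n : nat) (delta nu T : R) (i : nat) (z : int) : Prop :=
  [/\ (i = 1%N -> in_box (2 * Num.sqrt n%:R / T) z /\ out_gap nu T z),
      (forall j : nat, (1 <= j)%N -> 2 ^+ j <= delta * n%:R ->
         delta * n%:R / 2 ^+ j < i%:R <= delta * n%:R * 2 / 2 ^+ j ->
         in_box (Num.sqrt (2 ^+ (j + 3)) / (Num.sqrt delta * T)) z /\ out_gap nu T z)
    & (delta * n%:R < i%:R -> in_box (Num.sqrt 8 / (Num.sqrt delta * T)) z)].

(** v in A(n, delta, nu, T); coordinate i : 'I_n is the paper's coordinate i+1 *)
Definition in_A (n : nat) (delta nu T : R) (v : 'I_n -> int) : Prop :=
  forall i : 'I_n, in_Ai n delta nu T i.+1 (v i).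

(** Properties (a)-(d) of the rounding map Y (for fixed n), with constants C1, c1 *)
Definition Y_spec (n : nat) (C1 c1 : R)
    (Y : R -> ('I_n -> R) -> R -> R -> ('I_n -> int)) : Prop :=
  forall (p : R) (x : 'I_n -> R) (L s : R),
    0 < p <= 2^-1 -> -1 <= s <= 0 -> unit_vec x -> 1 <= L ->
    let T := Tp p x L in
    let y := fun i => (Y p x L s i)%:~R : R in
    [/\ (forall i, `|Num.sqrt n%:R / T * x i - y i| <= 1),
        (forall t, Num.sqrt n%:R <= t ->
            bprob p (fun b => `|bsum y b + s * Num.sqrt n%:R / T * \sum_(i < n) x i| <= t)
            <= C1 * L * T / Num.sqrt n%:R * t),
        levy p (bsum y) (Num.sqrt n%:R) >= c1 * L * T
      & `|Num.sqrt n%:R / T * \sum_(i < n) x i - \sum_(i < n) y i|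
                   <= C1 * Num.sqrt n%:R].

End Defs.

From HB Require Import structures.
From mathcomp Require Import all_boot all_order all_algebra all_fingroup.
From mathcomp Require Import boolp classical_sets reals.
From mathcomp Require Import zify ring lra.
Import Order.TTheory GRing.Theory Num.Theory.

Set Implicit Arguments. Unset Strict Implicit. Unset Printing Implicit Defensive.

(* Sort the coordinates of x by decreasing key 2 l_e + [x_e^2 > nu^2/n], where the dyadic
   level l_e of n x_e^2 is roughly log_2 (n x_e^2).  Since l_e <= n x_e^2, the keys of a unit
   vector sum to at most 3n, so at most 2^(4n) key vectors, hence at most 16^n sorting
   permutations, occur.  The coordinate in position i (counting from 1) is preceded by i - 1
   coordinates of at least its level, which forces i x_e^2 <= 2; and an incompressible vector
   has more than delta n coordinates with x_e^2 > nu^2/n, all of which are sorted first.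
   These two facts put any integer within distance 1 of (sqrt n / T_p(x, L)) x_e, such as
   Y_e, into the box and outside the gap prescribed for the i-th coordinate of A. *)

Section SortByKey.
Variables (n : nat) (k : 'I_n -> nat).

Definition before (a b : 'I_n) : bool := (k b < k a) || (k a == k b) && (a < b).

Definition ahead (b : 'I_n) : {set 'I_n} := [set a | before a b].

Lemma before_irr a : ~~ before a a.
Proof. by rewrite /before !ltnn eqxx. Qed.

Lemma before_trans a b c : before a b -> before b c -> before a c.
Proof.
rewrite /before => /orP[h1|/andP[/eqP h1 h1']] /orP[h2|/andP[/eqP h2 h2']];
  apply/orP; lia.
Qed.

Lemma before_total a b : a != b -> before a b || before b a.
Proof.
move=> neq; rewrite /before; case: (ltngtP (k a) (k b)) => //= _.
by case: ltngtP => // /val_inj/eqP; rewrite (negbTE neq).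
Qed.

Lemma ahead_proper a b : before a b -> ahead a \proper ahead b.
Proof.
move=> ab; apply/properP; split; last by exists a; rewrite !inE ?before_irr.
by apply/fintype.subsetP => c; rewrite !inE => /before_trans; apply.
Qed.

Lemma card_ahead_lt b : #|ahead b| < n.
Proof.
rewrite -[n in _ < n]card_ord -cardsT; apply: proper_card; apply/properP.
by split; [exact: finset.subsetT | exists b; rewrite !inE ?before_irr].
Qed.

Definition rank (b : 'I_n) : 'I_n := Ordinal (card_ahead_lt b).

Lemma rank_inj : injective rank.
Proof.
move=> a b /(congr1 val) /= eq_card; apply/eqP; apply: contraT => neq.
by case/orP: (before_total neq) => /ahead_proper/proper_card; rewrite eq_card ltnn.
Qed.

Definition sort_perm : {perm 'I_n} := (perm rank_inj)^-1%g.

Lemma card_ahead_sort_perm i : #|ahead (sort_perm i)| = i.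
Proof.
by have /(congr1 val) := permKV (perm rank_inj) i; rewrite permE.
Qed.

Lemma key_le_ahead a b : a \in ahead b -> k b <= k a.
Proof. by rewrite inE /before => /orP[/ltnW|/andP[/eqP->]]. Qed.

Lemma key_lt_ahead a b : k b < k a -> a \in ahead b.
Proof. by rewrite inE /before => ->. Qed.

End SortByKey.

Local Open Scope ring_scope.

Lemma sum_halves_le2 (F : realFieldType) (K : nat) : \sum_(j < K) (2^-1 : F) ^+ j <= 2.
Proof.
have -> : \sum_(j < K) (2^-1 : F) ^+ j = 2 - 2 * 2^-1 ^+ K.
  elim: K => [|K IH]; first by rewrite big_ord0 expr0 mulr1 subrr.
  by rewrite big_ord_recr /= IH exprS; field.
by rewrite gerBl mulr_ge0 // exprn_ge0 // invr_ge0.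
Qed.

Lemma card_ffun_sum_le (n K B : nat) :
  (#|[set f : {ffun 'I_n -> 'I_K} | \sum_i (f i : nat) <= B]| <= 2 ^ (B + n))%N.
Proof.
(* Every f in the set has weight 2^B prod_i 2^-(f i) >= 1, while the weights of all f
   add up to 2^B (sum_(j < K) 2^-j)^n <= 2^(B + n). *)
set G := [set f | _]; rewrite -(ler_nat rat) natrX exprD -sum1_card natr_sum.
pose w (f : {ffun 'I_n -> 'I_K}) : rat := \prod_i 2^-1 ^+ f i.
have w_ge0 f : 0 <= w f by apply: prodr_ge0 => i _; rewrite exprn_ge0.
have one_le_w f : f \in G -> 1 <= 2 ^+ B * w f.
  rewrite inE => sum_le; rewrite /w prodrXr exprVn -(subnK sum_le) exprD.
  by rewrite -mulrA mulfV ?expf_neq0 // mulr1 exprn_ege1.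
apply: (@le_trans _ _ (\sum_f 2 ^+ B * w f)).
  apply: le_trans (ler_sum _ one_le_w) _.
  by rewrite [leRHS](bigID (mem G)) lerDl sumr_ge0 // => f _; rewrite mulr_ge0 ?exprn_ge0.
rewrite -mulr_sumr ler_wpM2l ?exprn_ge0 //.
rewrite /w -(bigA_distr_bigA (fun (i : 'I_n) (j : 'I_K) => (2^-1 : rat) ^+ j)) /=.
rewrite -[in leRHS](card_ord n) -prodr_const ler_prod // => i _.
by rewrite sum_halves_le2 sumr_ge0 // => j _; rewrite exprn_ge0.
Qed.

Lemma card_ord_lt (n a : nat) : (a <= n)%N -> #|[set m : 'I_n | (m < a)%N]| = a.
Proof.
move=> le_an; rewrite -sum1_card (eq_bigl (fun m : 'I_n => (m < a)%N)) => [|m].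
  by rewrite (big_ord_narrow le_an) sum_nat_const card_ord muln1.
by rewrite inE.
Qed.

Section DyadicLevel.
Variables (F : realFieldType) (n : nat).

(* For [0 <= t <= 2 ^+ n], this is the least [G] such that [t <= 2 ^+ G]. *)
Definition dyadic_level (t : F) : nat := #|[set m : 'I_n | 2 ^+ m < t]|.

Lemma dyadic_level_le_n t : (dyadic_level t <= n)%N.
Proof. by rewrite -[n in (_ <= n)%N]card_ord max_card. Qed.

Lemma dyadic_level_mono t t' : t <= t' -> (dyadic_level t <= dyadic_level t')%N.
Proof.
move=> le_tt'; apply/subset_leq_card/fintype.subsetP => m.
by rewrite !inE => /lt_le_trans; apply.
Qed.

Lemma le_exp_dyadic_level t : t <= 2 ^+ n -> t <= 2 ^+ dyadic_level t.
Proof.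
move=> le_t; have [lt_n|] := ltnP (dyadic_level t) n; last first.
  by move=> /(conj (dyadic_level_le_n t))/andP/anti_leq->.
rewrite leNgt; apply/negP => lt_t.
suff: ((dyadic_level t).+1 <= dyadic_level t)%N by rewrite ltnn.
rewrite -[X in (X <= _)%N](card_ord_lt lt_n).
apply/subset_leq_card/fintype.subsetP => m; rewrite !inE => le_m.
by apply: le_lt_trans lt_t; rewrite ler_eXn2l ?ltr1n.
Qed.

Lemma exp_lt_of_le_dyadic_level t G :
  (0 < G)%N -> (G <= dyadic_level t)%N -> 2 ^+ G.-1 < t.
Proof.
move=> G_gt0 le_G; rewrite ltNge; apply/negP => le_t.
have le_Gn := leq_trans le_G (dyadic_level_le_n t).
suff: (dyadic_level t <= G.-1)%N by lia.
rewrite -(@card_ord_lt n G.-1); last by lia.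
apply/subset_leq_card/fintype.subsetP => m; rewrite !inE => lt_m.
by rewrite -(ltr_eXn2l (x := 2 : F)) ?ltr1n // (lt_le_trans lt_m).
Qed.

Lemma dyadic_level_le t : 0 <= t -> (dyadic_level t)%:R <= t.
Proof.
move=> t_ge0; case: (posnP (dyadic_level t)) => [->//|G_gt0].
apply/ltW/le_lt_trans/(exp_lt_of_le_dyadic_level G_gt0 (leqnn _)).
rewrite -natrX ler_nat; have := ltn_expl (dyadic_level t).-1 (isT : (1 < 2)%N).
by rewrite prednK.
Qed.

End DyadicLevel.

Definition coord_level (F : realFieldType) (n : nat) (x : 'I_n -> F) (e : 'I_n) : nat :=
  dyadic_level n (n%:R * x e ^+ 2).

Section UnitVector.
Variables (R : realType) (n : nat) (x : 'I_n -> R).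
Hypothesis x_unit : unit_vec x.

Lemma sum_sqr_coord_le1 (Q : {set 'I_n}) : \sum_(e in Q) x e ^+ 2 <= 1.
Proof.
rewrite -x_unit [leRHS](bigID (mem Q)) lerDl /=.
by apply: sumr_ge0 => e _; exact: sqr_ge0.
Qed.

Lemma sqr_coord_le1 e : x e ^+ 2 <= 1.
Proof. by have := sum_sqr_coord_le1 [set e]; rewrite big_set1. Qed.

Lemma coord_level_mono a b :
  x a ^+ 2 <= x b ^+ 2 -> (coord_level x a <= coord_level x b)%N.
Proof. by move=> le_ab; apply/dyadic_level_mono/ler_wpM2l. Qed.

Lemma sum_coord_level_le : (\sum_e coord_level x e <= n)%N.
Proof.
rewrite -(ler_nat R) natr_sum.
apply: (@le_trans _ _ (\sum_e n%:R * x e ^+ 2)).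
  by apply: ler_sum => e _; apply: dyadic_level_le; rewrite mulr_ge0 ?sqr_ge0.
by rewrite -mulr_sumr x_unit mulr1.
Qed.

Lemma sqr_coord_mul_card_le2 (Q : {set 'I_n}) e :
  {in Q, forall e', coord_level x e <= coord_level x e'}%N ->
  x e ^+ 2 * #|Q|%:R <= 2.
Proof.
move=> Q_above; have n_gt0 : (0 < n)%N := leq_ltn_trans (leq0n e) (ltn_ord e).
have card_le : (#|Q|%:R : R) <= n%:R by rewrite ler_nat -[n in (_ <= n)%N]card_ord max_card.
have x2_ge0 := sqr_ge0 (x e).
have le_G : n%:R * x e ^+ 2 <= 2 ^+ coord_level x e.
  apply: le_exp_dyadic_level; apply: le_trans (ler_wpM2l (ler0n _ n) (sqr_coord_le1 e)) _.
  by rewrite mulr1 -natrX ler_nat ltnW // ltn_expl.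
case: (posnP (coord_level x e)) => [G0 | G_gt0].
  by rewrite G0 expr0 in le_G; nra.
have below_sq : (#|Q|%:R * 2 ^+ (coord_level x e).-1 : R) <= n%:R.
  rewrite -sum1_card natr_sum mulr_suml -[leRHS]mulr1.
  apply: le_trans (ler_wpM2l (ler0n _ n) (sum_sqr_coord_le1 Q)); rewrite mulr_sumr.
  apply: ler_sum => e' /Q_above le_e'.
  by rewrite mul1r ltW // (exp_lt_of_le_dyadic_level G_gt0 le_e').
have exp_G : (2 : R) ^+ coord_level x e = 2 * 2 ^+ (coord_level x e).-1.
  by rewrite -exprS prednK.
rewrite exp_G in le_G; have := ler_wpM2r (ler0n R #|Q|) le_G.
by move=> prod_le; rewrite -(ler_pM2l (_ : 0 < n%:R)) ?ltr0n //; lra.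
Qed.

End UnitVector.

Definition large_coords (F : realFieldType) (n : nat) (nu : F) (x : 'I_n -> F) :
  {set 'I_n} := [set e | nu ^+ 2 / n%:R < x e ^+ 2].

Lemma card_large_coords_gt (R : realType) (n : nat) (delta nu : R) (x : 'I_n -> R) :
  0 < nu -> (0 < n)%N -> Incomp delta nu x ->
  delta * n%:R < #|large_coords nu x|%:R.
Proof.
move=> nu_gt0 n_gt0 [x_unit not_comp]; rewrite ltNge; apply/negP => card_le.
apply: not_comp; split => //.
exists (fun e => if e \in large_coords nu x then x e else 0); split.
  apply: le_trans card_le; rewrite ler_nat; apply/subset_leq_card/fintype.subsetP => e.
  by rewrite inE /=; case: ifP => [+ _ | _]; rewrite ?inE ?eqxx.
rewrite -[leRHS](ger0_norm (ltW nu_gt0)) -sqrtr_sqr; apply: ler_wsqrtr.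
apply: (@le_trans _ _ (\sum_(e < n) nu ^+ 2 / n%:R)).
  apply: ler_sum => e _; case: ifP => [_|]; first by rewrite subrr expr0n divr_ge0 ?sqr_ge0.
  by rewrite subr0 inE => /negbT; rewrite -leNgt.
by rewrite sumr_const card_ord -[_ *+ n]mulr_natr divfK // pnatr_eq0 -lt0n.
Qed.

Section Rounding.
Variable R : realType.

Lemma in_box_of_near (a b : R) (z : int) : `|a - z%:~R| <= 1 -> `|a| <= b -> in_box b z.
Proof.
move=> near le_ab; have := ceil_ge b; move: near le_ab; rewrite !ler_norml.
move=> /andP[? ?] /andP[? ?] ?.
by apply/andP; split; rewrite -(ler_int R) ?intrD ?intrN ?intrB /=; lra.
Qed.

Lemma out_gap_of_near (a nu T : R) (z : int) :
  `|a - z%:~R| <= 1 -> nu / T < `|a| -> out_gap nu T z.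
Proof.
move=> near lt_a /andP[]; have := floor_le (nu / T).
rewrite -!(ler_int R) ?intrD ?intrN ?intrB /=.
by move: near lt_a; rewrite ler_norml ltr_normr => /andP[? ?] /orP[] ? ? ? ?; lra.
Qed.

Lemma le_sqrt_div (u d T c : R) :
  0 < d -> 0 < T -> u ^+ 2 * d * T ^+ 2 <= c -> `|u| <= Num.sqrt c / (Num.sqrt d * T).
Proof.
move=> d_gt0 T_gt0 le_c; rewrite ler_pdivlMr ?mulr_gt0 ?sqrtr_gt0 //.
have lhs_ge0 : 0 <= `|u| * (Num.sqrt d * T) by rewrite !mulr_ge0 ?sqrtr_ge0 // ltW.
rewrite -(ger0_norm lhs_ge0) -sqrtr_sqr; apply: ler_wsqrtr.
by rewrite !exprMn (sqr_sqrtr (ltW d_gt0)) real_normK ?num_real // mulrA.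
Qed.

Lemma norm_scaled_bounds (r y T T' : R) :
  0 <= r -> 0 < T -> T / 2 <= T' <= T ->
  r * `|y| / T <= `|r / T' * y| <= 2 * (r * `|y|) / T.
Proof.
move=> r_ge0 T_gt0 /andP[T'_ge T'_le]; have T'_gt0 : 0 < T' by lra.
have -> : `|r / T' * y| = r * `|y| / T'.
  by rewrite normrM normf_div (ger0_norm r_ge0) (gtr0_norm T'_gt0) mulrAC.
have v_ge0 : 0 <= r * `|y| by rewrite mulr_ge0.
apply/andP; split.
  by rewrite ler_pdivrMr // mulrAC ler_pdivlMr //; nra.
by rewrite ler_pdivlMr // mulrAC ler_pdivrMr //; nra.
Qed.

(* Used with [w = sqrt n * |x_e|] and [a = sqrt n / T_p(x, L) * x_e], where [e] is the
   coordinate sorted into position [i]. *)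
Lemma in_Ai_of_scaled_coord (n : nat) (delta nu T w a : R) (i : nat) (z : int) :
  0 < T -> 0 < delta -> 1 <= delta * n%:R -> 0 <= w ->
  w ^+ 2 <= n%:R -> w ^+ 2 * i.+1%:R <= 2 * n%:R ->
  (i.+1%:R <= delta * n%:R -> nu < w) ->
  `|a - z%:~R| <= 1 -> w / T <= `|a| <= 2 * w / T ->
  in_Ai n delta nu T i.+1 z.
Proof.
move=> T_gt0 delta_gt0 delta_n w_ge0 w_le w_i w_large near /andP[a_ge a_le].
have n_gt0 : (0 : R) < n%:R.
  by rewrite ltr0n lt0n; apply/eqP => n0; move: delta_n; rewrite n0 mulr0; lra.
have gap : i.+1%:R <= delta * n%:R -> out_gap nu T z.
  move=> /w_large lt_w; apply: out_gap_of_near near (lt_le_trans _ a_ge).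
  by rewrite ltr_pM2r ?invr_gt0.
have sq_a : a ^+ 2 * delta * T ^+ 2 <= 4 * (w ^+ 2 * delta).
  have aT : `|a| * T <= 2 * w by rewrite -ler_pdivlMr.
  have aT_ge0 : 0 <= `|a| * T := mulr_ge0 (normr_ge0 a) (ltW T_gt0).
  have aT2 : (`|a| * T) ^+ 2 <= (2 * w) ^+ 2 by nra.
  have := ler_wpM2r (ltW delta_gt0) aT2; rewrite exprMn real_normK ?num_real //; lra.
have w_delta P : 0 <= P -> delta * n%:R <= i.+1%:R * P -> w ^+ 2 * delta <= 2 * P.
  move=> P_ge0 le_P; rewrite -(ler_pM2r n_gt0).
  have := ler_wpM2l (sqr_ge0 w) le_P; have := ler_wpM2r P_ge0 w_i; nra.
split.
- case=> i0; subst i; split; last exact: gap.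
  apply: in_box_of_near near (le_trans a_le _); rewrite ler_pM2r ?invr_gt0 // ler_pM2l //.
  by rewrite -(ger0_norm w_ge0) -sqrtr_sqr; apply: ler_wsqrtr.
- move=> j j_ge1 _ /andP[lo hi]; have P_ge2 : (2 : R) <= 2 ^+ j.
    by rewrite -[leLHS]expr1 ler_eXn2l ?ltr1n.
  split; last first.
    by apply: gap; apply: le_trans hi _; rewrite ler_pdivrMr ?exprn_gt0 //; nra.
  apply: in_box_of_near near (le_sqrt_div delta_gt0 T_gt0 _).
  rewrite exprD; apply: le_trans sq_a _.
  have lo' : delta * n%:R < i.+1%:R * 2 ^+ j by rewrite -ltr_pdivrMr ?exprn_gt0.
  have eight : (2 : R) ^+ 3 = 8 by rewrite -natrX.
  by have := w_delta _ (exprn_ge0 j (ler0n R 2)) (ltW lo'); lra.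
- move=> tail; apply: in_box_of_near near (le_sqrt_div delta_gt0 T_gt0 _).
  have := w_delta 1 ler01; rewrite mulr1 => /(_ (ltW tail)); lra.
Qed.

End Rounding.

Definition sort_key (F : realFieldType) (n : nat) (nu : F) (x : 'I_n -> F) (e : 'I_n) :=
  (2 * coord_level x e + (e \in large_coords nu x))%N.

Section SortedCoords.
Variables (R : realType) (n : nat) (nu : R) (x : 'I_n -> R).
Hypothesis x_unit : unit_vec x.

Let sigma := sort_perm (sort_key nu x).

Lemma sort_key_lt e : (sort_key nu x e < (2 * n).+2)%N.
Proof.
have := dyadic_level_le_n n (n%:R * x e ^+ 2); rewrite /sort_key /coord_level.
by move: (dyadic_level _ _) => G; case: (_ \in _) => /=; lia.
Qed.

Lemma sum_sort_key_le : (\sum_e sort_key nu x e <= 3 * n)%N.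
Proof.
rewrite big_split /= -big_distrr /= -[3%N]/(2 + 1)%N mulnDl mul1n.
rewrite leq_add ?leq_mul2l ?sum_coord_level_le //.
by rewrite -[n in (_ <= n)%N]card_ord -sum1_card leq_sum // => e _; case: (_ \in _).
Qed.

Lemma sqr_sort_perm_coord_le (i : 'I_n) : x (sigma i) ^+ 2 * i.+1%:R <= 2.
Proof.
set e := sigma i.
have card_Q : #|e |: ahead (sort_key nu x) e| = i.+1.
  by rewrite cardsU1 inE (negbTE (before_irr _ _)) card_ahead_sort_perm.
rewrite -card_Q; apply: sqr_coord_mul_card_le2 => // e'.
rewrite in_setU1 => /predU1P[-> // | /key_le_ahead].
by rewrite /sort_key; case: (_ \in _); case: (_ \in _) => /=; lia.
Qed.

Lemma sort_perm_coord_large (delta : R) (i : 'I_n) :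
  0 < nu -> Incomp delta nu x -> i.+1%:R <= delta * n%:R ->
  sigma i \in large_coords nu x.
Proof.
move=> nu_gt0 x_inc le_i; apply: contraT => small.
have large_ahead : large_coords nu x \subset ahead (sort_key nu x) (sigma i).
  apply/fintype.subsetP => e' large; apply: key_lt_ahead.
  rewrite /sort_key (negbTE small) large addn0 addn1 ltnS leq_mul2l /=.
  apply: coord_level_mono; move: small large; rewrite !inE -leNgt => small large.
  exact/ltW/(le_lt_trans small large).
have n_gt0 : (0 < n)%N := leq_ltn_trans (leq0n i) (ltn_ord i).
have := card_large_coords_gt nu_gt0 n_gt0 x_inc.
have := subset_leq_card large_ahead; rewrite card_ahead_sort_perm -(ler_nat R) => le_card.
by rewrite -natr1 in le_i; lra.
Qed.

Lemma in_A_sort_perm (delta T T' : R) (y : 'I_n -> int) :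
  0 < T -> T / 2 <= T' <= T -> n%:R^-1 <= delta -> 0 < nu -> Incomp delta nu x ->
  (forall e, `|Num.sqrt n%:R / T' * x e - (y e)%:~R| <= 1) ->
  in_A delta nu T (fun i => y (sigma i)).
Proof.
move=> T_gt0 T_range delta_ge nu_gt0 x_inc y_near i.
have n_gt0 : (0 : R) < n%:R by rewrite ltr0n (leq_ltn_trans _ (ltn_ord i)).
have delta_gt0 : 0 < delta by apply: lt_le_trans delta_ge; rewrite invr_gt0.
have delta_n : 1 <= delta * n%:R by rewrite -ler_pdivrMr // div1r.
set e := sigma i; set w := Num.sqrt n%:R * `|x e|.
have w_ge0 : 0 <= w by rewrite mulr_ge0 ?sqrtr_ge0.
have w_sq : w ^+ 2 = n%:R * x e ^+ 2.
  by rewrite exprMn sqr_sqrtr ?ler0n // real_normK ?num_real.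
apply: (@in_Ai_of_scaled_coord _ n delta nu T w _ i _ T_gt0 delta_gt0 delta_n w_ge0
  _ _ _ (y_near e)).
- by rewrite w_sq ler_piMr ?sqr_coord_le1 // ltW.
- by rewrite w_sq; have := sqr_sort_perm_coord_le i; nra.
- move=> /(sort_perm_coord_large nu_gt0 x_inc); rewrite inE ltr_pdivrMr // mulrC -w_sq.
  by nra.
- exact: norm_scaled_bounds (sqrtr_ge0 _) T_gt0 T_range.
Qed.

End SortedCoords.

Definition sort_perms (n : nat) : {set {perm 'I_n}} :=
  [set sort_perm (fun e => nat_of_ord (f e)) | f : {ffun _ -> _}
  in [set f : {ffun 'I_n -> 'I_(2 * n).+2} | \sum_i (f i : nat) <= 3 * n]%N].

Lemma card_sort_perms_le n : (#|sort_perms n| <= 16 ^ n)%N.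
Proof.
rewrite (leq_trans (leq_imset_card _ _)) // -[16%N]/(2 ^ 4)%N -expnM.
by rewrite [(4 * n)%N]mulSnr card_ffun_sum_le.
Qed.

Lemma sort_perm_key_in (R : realType) n (nu : R) (x : 'I_n -> R) :
  unit_vec x -> sort_perm (sort_key nu x) \in sort_perms n.
Proof.
move=> x_unit; pose f : {ffun 'I_n -> 'I_(2 * n).+2} := [ffun e => inord (sort_key nu x e)].
have f_val e : (f e : nat) = sort_key nu x e by rewrite ffunE inordK // sort_key_lt.
apply/imsetP; exists f; first by rewrite inE (eq_bigr _ (fun e _ => f_val e)) sum_sort_key_le.
by congr sort_perm; apply/funext => e; rewrite f_val.
Qed.

Unset Implicit Arguments.

Theorem corollary5p4 (R : realType) :
  exists C0 : R, 0 < C0 /\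
  forall n : nat, (2 <= n)%N ->
  exists Pi : {set {perm 'I_n}}, (#|Pi|%:R <= C0 ^+ n) /\
  forall (C1 c1 : R) (Y : R -> ('I_n -> R) -> R -> R -> ('I_n -> int)),
    0 < C1 -> 0 < c1 -> Y_spec C1 c1 Y ->
  forall (p delta s nu L T : R) (x : 'I_n -> R),
    0 < p <= 2^-1 -> n%:R^-1 <= delta <= 2^-1 -> -1 <= s <= 0 ->
    0 < nu <= 1 -> 1 <= L -> 0 < T ->
    Incomp delta nu x ->
    T / 2 <= Tp p x L <= T ->
    exists2 sigma, sigma \in Pi &
      in_A delta nu T (fun i => Y p x L s (sigma i)).
Proof.
exists 16; split => // n n_ge2.
exists (sort_perms n); split; first by rewrite -natrX ler_nat card_sort_perms_le.
move=> C1 c1 Y _ _ Y_ok p delta s nu L T x p_range /andP[delta_ge _] s_range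
  /andP[nu_gt0 _] L_ge1 T_gt0 x_inc T_range.
have x_unit : unit_vec x by case: x_inc.
have [Y_near _ _ _] := Y_ok p x L s p_range s_range x_unit L_ge1.
exists (sort_perm (sort_key nu x)); first exact: sort_perm_key_in.
exact: in_A_sort_perm T_gt0 T_range delta_ge nu_gt0 x_inc Y_near.
Qed.
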